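(* Let $n\ge2$, $\phi\in\mathrm{End}(F_n)$, and let $(X,x_1)\to(R_n,* )$ be the finite based cover associated to a finite-index fully characteristic subgroup $K\le F_n$, with deck group $\Gamma=F_n/K$. If the endomorphism of $\Gamma$ induced by $\phi$ is not the identity, then the endomorphism of $H_1(X,\mathbb{Z})$ induced by $\phi$ is not the identity.
   Context: $F_n$ is the free group of rank $n\ge2$, identified with $\pi_1(R_n,* )$ where $R_n$ is the wedge of $n$ circles with wedge point $*$. A subgroup $K\le F_n$ is fully characteristic if $\phi(K)\subseteq K$ for all $\phi\in\mathrm{End}(F_n)$; then every $\phi\in\mathrm{End}(F_n)$ induces an endomorphism of $\Gamma=F_n/K$. The based cover associated to $K$ is the connected covering $p:(X,x_1)\to(R_n,* )$ with $p_*\pi_1(X,x_1)=K$, with deck group $\Gamma$. The endomorphism of $H_1(X,\mathbb{Z})\cong K^{ab}$ induced by $\phi$ is the abelianization of $\phi|_K:K\to K$. *)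

From mathcomp Require Import all_boot.
Set Implicit Arguments. Unset Strict Implicit. Unset Printing Implicit Defensive.

(* a letter (i, b) is x_i if b = true and x_i^{-1} if b = false *)
Definition letter (n : nat) := ('I_n * bool)%type.
Definition linv n (x : letter n) : letter n := (x.1, ~~ x.2).

Fixpoint reducedb n (w : seq (letter n)) : bool :=
  match w with
  | x :: ((y :: _) as w') => (y != linv x) && reducedb w'
  | _ => true
  end.

Definition push n (x : letter n) (w : seq (letter n)) : seq (letter n) :=
  match w with
  | y :: w' => if y == linv x then w' else x :: w
  | [::] => [:: x]
  end.

Definition nf n (w : seq (letter n)) : seq (letter n) := foldr (@push n) [::] w.

Lemma push_red n (x : letter n) w : reducedb w -> reducedb (push x w).
Proof.
case: w => [|y w'] //= H.
case: ifP => Hy.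
- by case: w' H => //= z w'' /andP[].
- by rewrite /= Hy H.
Qed.

Lemma nf_red n (w : seq (letter n)) : reducedb (nf w).
Proof. by elim: w => [|x w IH] //=; apply: push_red. Qed.

Record fg (n : nat) := FG { fgw : seq (letter n); fgP : reducedb fgw }.

Definition fg1 n : fg n := @FG n [::] isT.
Definition fgmul n (a b : fg n) : fg n := FG (nf_red (fgw a ++ fgw b)).
Definition fginv n (a : fg n) : fg n := FG (nf_red (rev (map (@linv n) (fgw a)))).

Definition is_endo n (phi : fg n -> fg n) : Prop :=
  forall a b, phi (fgmul a b) = fgmul (phi a) (phi b).

Definition is_subgroup n (K : fg n -> Prop) : Prop :=
  [/\ K (fg1 n), (forall a b, K a -> K b -> K (fgmul a b))
    & (forall a, K a -> K (fginv a))].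

Definition finite_index n (K : fg n -> Prop) : Prop :=
  exists (N : nat) (r : 'I_N -> fg n), forall g, exists i, K (fgmul (fginv (r i)) g).

Definition fully_characteristic n (K : fg n -> Prop) : Prop :=
  forall phi, is_endo phi -> forall k, K k -> K (phi k).

Inductive gen n (S : fg n -> Prop) : fg n -> Prop :=
  | gen1 : gen S (fg1 n)
  | genS x : S x -> gen S x
  | genM x y : gen S x -> gen S y -> gen S (fgmul x y)
  | genV x : gen S x -> gen S (fginv x).

Definition fgcomm n (a b : fg n) : fg n :=
  fgmul (fgmul (fginv a) (fginv b)) (fgmul a b).

Definition commutator_sub n (K : fg n -> Prop) : fg n -> Prop :=
  gen (fun c => exists a b, [/\ K a, K b & c = fgcomm a b]).

Definition induces_id_quot n (K : fg n -> Prop) (phi : fg n -> fg n) : Prop :=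
  forall g, K (fgmul (phi g) (fginv g)).

(* phi induces the identity on H_1(X,Z) = K^ab = K / [K,K] *)
Definition induces_id_H1 n (K : fg n -> Prop) (phi : fg n -> fg n) : Prop :=
  forall k, K k -> commutator_sub K (fgmul (phi k) (fginv k)).

From mathcomp Require Import all_boot boolp.
From Stdlib Require Import ZArith Lia.
Set Implicit Arguments. Unset Strict Implicit. Unset Printing Implicit Defensive.

(* Counting, for a loop k in K, the signed passages of its lift starting at a
   vertex K u of X through a fixed lift of the j-th loop of R_n gives a
   homomorphism K -> Z vanishing on [K, K], i.e. a functional on H_1(X, Z).
   If phi acts trivially on H_1(X, Z), these functionals are phi-invariant;
   comparing k with g k g^-1 then shows that they do not change when the
   starting vertex is moved by the deck transformation t = g^-1 phi(g).  For
   n >= 2 a nontrivial deck transformation always moves some such count, so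
   t lies in K for every g, i.e. phi induces the identity on F_n / K. *)

Declare Scope fg_scope.
Delimit Scope fg_scope with fg.
Bind Scope fg_scope with fg.
Local Notation "a * b" := (fgmul a b) : fg_scope.
Local Notation "a ^-1" := (fginv a) : fg_scope.
Local Open Scope fg_scope.

Section FreeGroup.
Variable n : nat.
Local Notation L := (letter n).
Local Notation G := (fg n).

Lemma linvK : involutive (@linv n).
Proof. by case=> i b; rewrite /linv negbK. Qed.

Lemma nf_reduced (w : seq L) : reducedb w -> nf w = w.
Proof.
elim: w => [|x w IH] //= red_xw.
have red_w : reducedb w by case: w red_xw {IH} => //= y w /andP[].
rewrite IH //; case: w red_xw {IH red_w} => [|y w] //= /andP[y_ne _].
by rewrite (negbTE y_ne).
Qed.

Lemma push_linv (x : L) w : reducedb w -> push x (push (linv x) w) = w.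
Proof.
case: w => [|y w] /=; first by rewrite eqxx.
case: ifP => [/eqP y_eq|_] red_yw; last by rewrite /= eqxx.
rewrite linvK in y_eq; subst y.
by case: w red_yw => [|z w] //= /andP[/negbTE->].
Qed.

Lemma nf_catr (s t : seq L) : nf (s ++ t) = nf (s ++ nf t).
Proof. by rewrite /nf !foldr_cat -/(nf t) -/(nf (nf t)) (nf_reduced (nf_red t)). Qed.

Lemma nf_catl (s t : seq L) : nf (s ++ t) = nf (nf s ++ t).
Proof.
elim: s => [|x s IH] //=; rewrite IH.
case: (nf s) => [|y r] //=.
by case: ifP => [/eqP ->|] //=; rewrite push_linv ?nf_red.
Qed.

Definition invw (s : seq L) := rev (map (@linv n) s).

Lemma invw_cat s t : invw (s ++ t) = invw t ++ invw s.
Proof. by rewrite /invw map_cat rev_cat. Qed.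

Lemma invwK : involutive invw.
Proof.
by move=> s; rewrite /invw map_rev revK -map_comp (map_id_in (fun x _ => linvK x)).
Qed.

Lemma nf_cat_invw s : nf (s ++ invw s) = [::].
Proof.
elim: s => [|x s IH] //=.
by rewrite /invw /= rev_cons -cats1 catA -/(invw s) nf_catl IH /= eqxx.
Qed.

Lemma nf_invw_cat s : nf (invw s ++ s) = [::].
Proof. by rewrite -{2}(invwK s) nf_cat_invw. Qed.

Definition fg_of (s : seq L) : G := FG (nf_red s).

Lemma fgw_inj : injective (@fgw n).
Proof.
by case=> [a red_a] [b red_b] /= eq_ab; subst b; rewrite (eq_irrelevance red_a red_b).
Qed.

Lemma fgwK : cancel (@fgw n) fg_of.
Proof. by move=> a; apply: fgw_inj; rewrite /= nf_reduced // fgP. Qed.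

Lemma fg_of_nil : fg_of [::] = fg1 n.
Proof. exact: fgw_inj. Qed.

Lemma fg_of_cat s t : fg_of (s ++ t) = fg_of s * fg_of t.
Proof. by apply: fgw_inj => /=; rewrite -nf_catl -nf_catr. Qed.

Lemma fg_of_invw s : fg_of (invw s) = (fg_of s)^-1.
Proof.
apply: fgw_inj => /=; rewrite -/(invw (nf s)).
have lhs : nf (invw (nf s) ++ (nf s ++ invw s)) = nf (invw s).
  by rewrite catA nf_catl nf_invw_cat.
by rewrite -lhs nf_catr -nf_catl nf_cat_invw /= cats0.
Qed.

Lemma fgmulA (a b c : G) : a * (b * c) = a * b * c.
Proof. by rewrite -[a]fgwK -[b]fgwK -[c]fgwK -!fg_of_cat catA. Qed.

Lemma fgmul1g (a : G) : fg1 n * a = a.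
Proof. by rewrite -fg_of_nil -[a]fgwK -fg_of_cat. Qed.

Lemma fgmulg1 (a : G) : a * fg1 n = a.
Proof. by rewrite -fg_of_nil -[a]fgwK -fg_of_cat cats0. Qed.

Lemma fgmulVg (a : G) : a^-1 * a = fg1 n.
Proof. by apply: fgw_inj; rewrite /= -nf_catl nf_invw_cat. Qed.

Lemma fgmulgV (a : G) : a * a^-1 = fg1 n.
Proof. by apply: fgw_inj; rewrite /= -nf_catr nf_cat_invw. Qed.

Lemma fginvM (a b : G) : (a * b)^-1 = b^-1 * a^-1.
Proof. by rewrite -[a]fgwK -[b]fgwK -fg_of_cat -!fg_of_invw -fg_of_cat invw_cat. Qed.

Lemma fgmulKg (a b : G) : a^-1 * (a * b) = b.
Proof. by rewrite fgmulA fgmulVg fgmul1g. Qed.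

Lemma fgmulKVg (a b : G) : a * (a^-1 * b) = b.
Proof. by rewrite fgmulA fgmulgV fgmul1g. Qed.

Lemma fgmulgK (a b : G) : b * a * a^-1 = b.
Proof. by rewrite -fgmulA fgmulgV fgmulg1. Qed.

Lemma fgmulgKV (a b : G) : b * a^-1 * a = b.
Proof. by rewrite -fgmulA fgmulVg fgmulg1. Qed.

End FreeGroup.

Section Subgroup.
Variables (n : nat) (K : fg n -> Prop).
Hypothesis Ksub : is_subgroup K.

Lemma subgroup1 : K (fg1 n).
Proof. by case: Ksub. Qed.

Lemma subgroupM [a b] : K a -> K b -> K (a * b).
Proof. by case: Ksub => _ KM _; apply: KM. Qed.

Lemma subgroupV [a] : K a -> K a^-1.
Proof. by case: Ksub => _ _ KV; apply: KV. Qed.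

Lemma subgroup_coset [u a b] : K (u * a) -> K (u * b) -> K (a^-1 * b).
Proof. by move=> /subgroupV Kua /(subgroupM Kua); rewrite fginvM -fgmulA fgmulKg. Qed.

Lemma commutator_sub_sub [x] : commutator_sub K x -> K x.
Proof.
elim=> [|_ [a [b [Ka Kb ->]]]|a b _ Ka _ Kb|a _ Ka].
- exact: subgroup1.
- by rewrite /fgcomm; apply: subgroupM; apply: subgroupM => //; apply: subgroupV.
- exact: subgroupM.
- exact: subgroupV.
Qed.

End Subgroup.

Lemma fully_characteristic_normal n (K : fg n -> Prop) :
  fully_characteristic K -> forall g x, K x -> K (g * x * g^-1).
Proof.
move=> Kfc g x; apply: (Kfc (fun y => g * y * g^-1)) => a b.
by rewrite !fgmulA fgmulgKV.
Qed.

Section Endomorphism.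
Variables (n : nat) (phi : fg n -> fg n).
Hypothesis phiM : is_endo phi.

Lemma endo1 : phi (fg1 n) = fg1 n.
Proof.
have := phiM (fg1 n) (fg1 n); rewrite fgmul1g => phi1.
by rewrite -(fgmulgK (phi (fg1 n)) (phi (fg1 n))) -phi1 fgmulgV.
Qed.

Lemma endoV a : phi a^-1 = (phi a)^-1.
Proof.
have := phiM a^-1 a; rewrite fgmulVg endo1 => phi1.
by rewrite -(fgmulgK (phi a) (phi a^-1)) -phi1 fgmul1g.
Qed.

End Endomorphism.

Section Crossings.
Variables (n : nat) (K : fg n -> Prop) (j : 'I_n).
Local Notation L := (letter n).
Local Notation G := (fg n).

(* The vertices of the cover X are the cosets K u.  [crossings u s] is the
   signed number of times the lift of the path s starting at K u runs
   through the lift at the base vertex K of the j-th loop of R_n. *)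
Definition crossing_at (u : G) (x : L) : Z :=
  if x.1 == j then
    if x.2 then Z.b2z `[< K u >] else (- Z.b2z `[< K (u * fg_of [:: x]) >])%Z
  else 0%Z.

Fixpoint crossings (u : G) (s : seq L) : Z :=
  if s is x :: s' then (crossing_at u x + crossings (u * fg_of [:: x]) s')%Z
  else 0%Z.

Lemma crossings_cat u s t :
  crossings u (s ++ t) = (crossings u s + crossings (u * fg_of s) t)%Z.
Proof.
elim: s u => [|x s IH] u /=; first by rewrite fg_of_nil fgmulg1.
by rewrite IH -fgmulA -(fg_of_cat [:: x]) Z.add_assoc.
Qed.

Lemma fg_of_letter_linv (x : L) : fg_of [:: x] * fg_of [:: linv x] = fg1 n.
Proof. by rewrite -fg_of_cat; apply: fgw_inj; rewrite /= eqxx. Qed.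

Lemma crossings_cancel u x s : crossings u (x :: linv x :: s) = crossings u s.
Proof.
rewrite /= -fgmulA fg_of_letter_linv fgmulg1 Z.add_assoc.
suff -> : (crossing_at u x + crossing_at (u * fg_of [:: x]) (linv x) = 0)%Z by [].
rewrite /crossing_at -fgmulA fg_of_letter_linv fgmulg1.
by case: x => i [] /=; case: (i == j); lia.
Qed.

Lemma crossings_nf u s : crossings u (nf s) = crossings u s.
Proof.
elim: s u => [|x s IH] u //=; rewrite -IH.
case: (nf s) => [|y r] //=; case: ifP => [/eqP ->|//].
exact: esym (crossings_cancel u x r).
Qed.

Lemma crossings_other u s : all (fun x : L => x.1 != j) s -> crossings u s = 0%Z.
Proof.
elim: s u => [|x s IH] u //= /andP[x_ne /IH->].
by rewrite /crossing_at (negbTE x_ne).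
Qed.

Definition crossing (u a : G) : Z := crossings u (fgw a).

Lemma crossing_fg_of u s : crossing u (fg_of s) = crossings u s.
Proof. exact: crossings_nf. Qed.

Lemma crossing1 u : crossing u (fg1 n) = 0%Z.
Proof. by []. Qed.

Lemma crossingM u a b : crossing u (a * b) = (crossing u a + crossing (u * a) b)%Z.
Proof. by rewrite /crossing /= crossings_nf crossings_cat fgwK. Qed.

Hypothesis Ksub : is_subgroup K.

Lemma crossings_translate k u s : K k -> crossings (k * u) s = crossings u s.
Proof.
move=> Kk; elim: s u => [|x s IH] u //=; rewrite -fgmulA IH.
have Kl v : K (k * v) <-> K v.
  split=> [|Kv]; last exact: (subgroupM Ksub Kk Kv).
  by move/(subgroupM Ksub (subgroupV Ksub Kk)); rewrite fgmulKg.
by rewrite /crossing_at -fgmulA !(asbool_equiv_eq (Kl _)).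
Qed.

Lemma crossing_translate k u a : K k -> crossing (k * u) a = crossing u a.
Proof. exact: crossings_translate. Qed.

Hypothesis Knormal : forall g x, K x -> K (g * x * g^-1).

Lemma crossing_translater u k a : K k -> crossing (u * k) a = crossing u a.
Proof.
by move=> Kk; rewrite -{1}(fgmulgKV u (u * k)) crossing_translate //; apply: Knormal.
Qed.

Lemma crossing_homM u a b : K a -> crossing u (a * b) = (crossing u a + crossing u b)%Z.
Proof. by move=> Ka; rewrite crossingM crossing_translater. Qed.

Lemma crossingV u a : K a -> crossing u a^-1 = (- crossing u a)%Z.
Proof.
by move=> Ka; have := crossing_homM u a^-1 Ka; rewrite fgmulgV crossing1; lia.
Qed.

Lemma crossing_conj u p x : K x -> crossing u (p * x * p^-1) = crossing (u * p) x.
Proof.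
move=> Kx; have := crossingM u p p^-1; rewrite fgmulgV crossing1 => cancel_p.
by rewrite !crossingM fgmulA (crossing_translater (u * p)) //; lia.
Qed.

Lemma crossing_commutator u x : commutator_sub K x -> crossing u x = 0%Z.
Proof.
elim=> [|_ [a [b [Ka Kb ->]]]|a b ca IHa cb IHb|a ca IHa] //.
- have KVab := subgroupM Ksub (subgroupV Ksub Ka) (subgroupV Ksub Kb).
  have KVa := subgroupV Ksub Ka; have KVb := subgroupV Ksub Kb.
  by rewrite /fgcomm !crossing_homM ?crossingV //; lia.
- by rewrite crossing_homM ?IHa ?IHb; last exact: (commutator_sub_sub Ksub ca).
- by rewrite crossingV ?IHa; last exact: (commutator_sub_sub Ksub ca).
Qed.

End Crossings.

Section InducedIdentity.
Variables (n : nat) (K : fg n -> Prop) (phi : fg n -> fg n).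
Hypotheses (Ksub : is_subgroup K) (Kfc : fully_characteristic K).
Hypotheses (phiM : is_endo phi) (phi_H1 : induces_id_H1 K phi).
Let Knormal := fully_characteristic_normal Kfc.

Lemma crossing_endo j u k : K k -> crossing K j u (phi k) = crossing K j u k.
Proof.
move=> Kk; have Kphik := commutator_sub_sub Ksub (phi_H1 Kk).
rewrite -{1}(fgmulgKV k (phi k)) crossing_homM //.
by rewrite (crossing_commutator j Ksub Knormal _ (phi_H1 Kk)).
Qed.

(* Conjugating by g moves the base point of a crossing count by g, and phi
   commutes with conjugation up to replacing g by phi g. *)
Lemma crossing_translate_endo j u g k :
  K k -> crossing K j (u * g) k = crossing K j (u * phi g) k.
Proof.
move=> Kk; have Kgk := Knormal g Kk.
rewrite -(crossing_endo j (u * phi g) Kk).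
rewrite -(crossing_conj j Ksub Knormal u g Kk).
rewrite -(crossing_conj j Ksub Knormal u (phi g) (Kfc phiM Kk)).
by rewrite -(endoV phiM) -!phiM (crossing_endo j u Kgk).
Qed.

End InducedIdentity.

Section GeneratorPowers.
Variables (n : nat) (K : fg n -> Prop).
Hypothesis Ksub : is_subgroup K.
Local Notation G := (fg n).

Definition genX (j : 'I_n) (m : nat) : G := fg_of (nseq m (j, true)).

Lemma genX0 j : genX j 0 = fg1 n.
Proof. exact: fg_of_nil. Qed.

Lemma genXD j a b : genX j (a + b) = genX j a * genX j b.
Proof. by rewrite /genX nseqD fg_of_cat. Qed.

Lemma fg_of_nseq_inv j m : fg_of (nseq m (j, false)) = (genX j m)^-1.
Proof. by rewrite -fg_of_invw /invw map_nseq rev_nseq. Qed.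

Lemma genX_sub j a b : a <= b -> (genX j a)^-1 * genX j b = genX j (b - a).
Proof. by move=> le_ab; rewrite -{1}(subnKC le_ab) genXD fgmulKg. Qed.

Lemma crossings_genX_avoid j u m J :
  (forall i, m <= i < m + J -> ~ K (u * genX j i)) ->
  crossings K j (u * genX j m) (nseq J (j, true)) = 0%Z.
Proof.
elim: J m => [|J IH] m avoid //=.
rewrite /crossing_at /= eqxx asboolF; last first.
  by apply: avoid; rewrite leqnn addnS ltnS leq_addr.
rewrite -fgmulA -(genXD j m 1) addn1 IH // => i /andP[le_mi lt_i].
by apply: avoid; rewrite ltnW // addnS -addSn.
Qed.

Lemma crossings_genX_first j J :
  0 < J -> (forall i, 0 < i < J -> ~ K (genX j i)) ->
  crossings K j (fg1 n) (nseq J (j, true)) = 1%Z.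
Proof.
case: J => // J _ avoid /=.
rewrite /crossing_at /= eqxx asboolT; last exact: subgroup1 Ksub.
rewrite (crossings_genX_avoid (m := 1)) // => i range.
by rewrite fgmul1g; apply: avoid.
Qed.

Lemma crossing_separates (j j' : 'I_n) J L t :
  j != j' -> 0 < J ->
  (forall i, 0 < i < J -> ~ K (genX j i)) ->
  (forall i, i < J -> ~ K (t * genX j i)) ->
  let w := fg_of (nseq J (j, true) ++ nseq L (j', false)) in
  crossing K j t w <> crossing K j (fg1 n) w.
Proof.
move=> ne_j J_gt0 avoid1 avoid_t /=.
have other u : crossings K j u (nseq L (j', false)) = 0%Z.
  by apply: crossings_other; rewrite all_nseq /= (eq_sym j') ne_j orbT.
rewrite !crossing_fg_of !crossings_cat !other crossings_genX_first //.
by rewrite -[t in crossings _ _ t](fgmulg1 t) -(genX0 j) crossings_genX_avoid.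
Qed.

Hypothesis Kfin : finite_index K.

Lemma exists_genX_in j : exists2 m, 0 < m & K (genX j m).
Proof.
case: Kfin => N [r cover].
have [f Kf] := choice (fun m : 'I_N.+1 => cover (genX j m)).
have /injectivePn [m1 [m2 ne_m f_m]] : ~~ injectiveb f.
  by apply/injectiveP => /leq_card; rewrite !card_ord ltnn.
have K_diff (a b : 'I_N.+1) : a < b -> f a = f b -> K (genX j (b - a)).
  move=> lt_ab f_ab; rewrite -(genX_sub j (ltnW lt_ab)).
  by apply: (subgroup_coset Ksub (Kf a)); rewrite f_ab.
case: (ltngtP m1 m2) => [lt_m|lt_m|/val_inj eq_m]; last by rewrite eq_m eqxx in ne_m.
- by exists (m2 - m1); [rewrite subn_gt0 | exact: K_diff lt_m f_m].
- by exists (m1 - m2); [rewrite subn_gt0 | exact: K_diff lt_m (esym f_m)].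
Qed.

Lemma first_return j t : ~ K t -> exists J, [/\ 0 < J, K (genX j J) \/ K (t * genX j J),
  forall i, 0 < i < J -> ~ K (genX j i) & forall i, i < J -> ~ K (t * genX j i)].
Proof.
move=> not_Kt; pose P m := (0 < m) && `[< K (genX j m) \/ K (t * genX j m) >].
have [m m_gt0 Km] := exists_genX_in j.
have : exists m, P m by exists m; rewrite /P m_gt0; apply/asboolP; left.
case/ex_minnP => J /andP[J_gt0 /asboolP KJ] J_min.
have below i : 0 < i < J -> ~ (K (genX j i) \/ K (t * genX j i)).
  move=> /andP[i_gt0 lt_iJ] Ki; have := J_min i; rewrite /P i_gt0 leqNgt lt_iJ.
  by move/(_ (asboolT Ki)).
exists J; split=> // [i range Ki|]; first by apply: (below i range); left.
case=> [_|i lt_iJ]; first by rewrite genX0 fgmulg1.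
by move=> Ki; apply: (below i.+1) => //; right.
Qed.

Hypothesis Knormal : forall g x, K x -> K (g * x * g^-1).

(* If t^-1 K meets both <x_0> and <x_1>, the loop x_0^J0 x_1^-J1 lies in K
   and tells K from K t; this is where n >= 2 is used. *)
Lemma crossing_detects_translation t : 1 < n -> ~ K t ->
  exists j k, K k /\ crossing K j t k <> crossing K j (fg1 n) k.
Proof.
move=> n_gt1 not_Kt.
pose j0 : 'I_n := Ordinal (ltnW n_gt1); pose j1 : 'I_n := Ordinal n_gt1.
have ne01 : j0 != j1 by []; have ne10 : j1 != j0 by [].
have [J0 [J0_gt0 [K0|Kt0] min0 avoid0]] := first_return j0 not_Kt.
  exists j0, (genX j0 J0); split=> //.
  by have := crossing_separates (L := 0) ne01 J0_gt0 min0 avoid0; rewrite /= cats0.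
have [J1 [J1_gt0 [K1|Kt1] min1 avoid1]] := first_return j1 not_Kt.
  exists j1, (genX j1 J1); split=> //.
  by have := crossing_separates (L := 0) ne10 J1_gt0 min1 avoid1; rewrite /= cats0.
exists j0, (genX j0 J0 * (genX j1 J1)^-1); split.
  have := Knormal (genX j0 J0) (subgroup_coset Ksub Kt1 Kt0).
  by rewrite fgmulA fgmulgK.
have := crossing_separates (L := J1) ne01 J0_gt0 min0 avoid0.
by rewrite fg_of_cat fg_of_nseq_inv.
Qed.

End GeneratorPowers.

Theorem corollary1p3 (n : nat) (K : fg n -> Prop) (phi : fg n -> fg n) :
  2 <= n ->
  is_subgroup K -> finite_index K -> fully_characteristic K ->
  is_endo phi ->
  ~ induces_id_quot K phi ->
  ~ induces_id_H1 K phi.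
Proof.
move=> n_gt1 Ksub Kfin Kfc phiM not_id_quot phi_H1.
have Knormal := fully_characteristic_normal Kfc.
have [g not_Kg] : exists g, ~ K (phi g * g^-1) by apply/existsNP.
have not_Kt : ~ K (g^-1 * phi g).
  by move=> /(Knormal g); rewrite fgmulKVg.
have [j [k [Kk]]] := crossing_detects_translation Ksub Kfin Knormal n_gt1 not_Kt.
by rewrite -(crossing_translate_endo Ksub Kfc phiM phi_H1 j _ _ Kk) fgmulVg.
Qed.
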